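(* Let $R$ be a local $\mathbb{F}_p$-algebra and let $M$ be a finitely presented $R$-module such that $F_R^*M\simeq M$, where $F_R$ is the absolute Frobenius of $R$. Then $M$ is free. *)

From HB Require Import structures.
From mathcomp Require Import all_boot all_order all_algebra.
Set Implicit Arguments. Unset Strict Implicit. Unset Printing Implicit Defensive.
Import GRing.Theory.
Local Open Scope ring_scope.

Section Defs.
Variable R : comUnitRingType.

Definition is_ideal (I : R -> Prop) : Prop :=
  I 0 /\ (forall x y, I x -> I y -> I (x + y)) /\ (forall a x, I x -> I (a * x)).

Definition maximal_ideal (I : R -> Prop) : Prop :=
  is_ideal I /\ ~ I 1 /\
  (forall J : R -> Prop, is_ideal J -> ~ J 1 -> (forall x, I x -> J x) ->
     forall x, J x -> I x).

Definition local_ring : Prop :=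
  exists I, maximal_ideal I /\
    forall J, maximal_ideal J -> forall x, J x <-> I x.

Definition Fp_algebra (p : nat) : Prop := prime p /\ (p%:R : R) = 0.

Definition Rlinear (U V : lmodType R) (f : U -> V) : Prop :=
  forall (a : R) (u v : U), f (a *: u + v) = a *: f u + f v.

Definition frob_linear (p : nat) (U V : lmodType R) (f : U -> V) : Prop :=
  (forall u v : U, f (u + v) = f u + f v) /\
  (forall (a : R) (u : U), f (a *: u) = a ^+ p *: f u).

(* (N, phi) is the Frobenius pullback F_R^* M = R (x)_{F_R, R} M, characterized
   by its universal property: phi : M -> N is p-linear and every p-linear map
   M -> N' factors uniquely through an R-linear map N -> N'. *)
Definition is_frob_pullback (p : nat) (M N : lmodType R) (phi : M -> N) : Prop :=
  frob_linear p phi /\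
  forall (N' : lmodType R) (psi : M -> N'), frob_linear p psi ->
    exists g : N -> N', Rlinear g /\ (forall m, psi m = g (phi m)) /\
      forall g' : N -> N', Rlinear g' -> (forall m, psi m = g' (phi m)) ->
        forall x, g' x = g x.

Definition frob_pullback_iso (p : nat) (M : lmodType R) : Prop :=
  exists phi : M -> M, is_frob_pullback p phi.

Definition finitely_presented (M : lmodType R) : Prop :=
  exists (n m : nat) (f : 'rV[R]_n -> M) (g : 'rV[R]_m -> 'rV[R]_n),
    Rlinear f /\ Rlinear g /\ (forall x : M, exists u, f u = x) /\
    (forall u, f u = 0 <-> exists w, g w = u).

Definition free_module (M : lmodType R) : Prop :=
  exists (I : Type) (e : I -> M),
    (forall (n : nat) (idx : 'I_n -> I) (c : 'I_n -> R), injective idx ->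
       \sum_(i < n) c i *: e (idx i) = 0 -> forall i, c i = 0) /\
    (forall x : M, exists (n : nat) (idx : 'I_n -> I) (c : 'I_n -> R),
       x = \sum_(i < n) c i *: e (idx i)).
End Defs.

(* Choose a generating family x of M of minimal size and, M being finitely
   presented, a matrix W whose rows span the relations of x; by minimality no
   entry of W is a unit.  Testing the universal property of phi : M -> F^*M on
   an explicit model shows that phi(x) generates F^*M and that its relations
   are spanned by the rows of W^(p), the entrywise p-th power of W.  When
   F^*M = M this gives matrices Q, P with x = Q phi(x) and phi(x) = P x, hence
   W Q = B W^(p) and 1 - Q P = T W, so that
     W = W (Q P + T W) = B W^(p) P + (W T) W.
   Since p > 1 and R is local, every entry of W then lies in m I, where I is
   the ideal generated by the entries of W and m the maximal ideal; by
   Nakayama W = 0, i.e. x is a basis of M. *)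

From HB Require Import structures.
From mathcomp Require Import all_boot all_order all_algebra.
From mathcomp Require Import perm boolp classical_sets.
Set Implicit Arguments. Unset Strict Implicit. Unset Printing Implicit Defensive.
Import GRing.Theory.
Local Open Scope ring_scope.

Section LocalRing.
Variable R : comUnitRingType.
Implicit Types a b : R.

Lemma nonunit_maximal_ideal a : a \notin GRing.unit ->
  exists I, maximal_ideal I /\ I a.
Proof.
move=> Na; pose proper_with_a (A : set R) := [/\ is_ideal A, ~ A 1 & A a].
(* Chains may be empty, so [set0] has to be admitted. *)
pose P (A : set R) := A = set0 \/ proper_with_a A.
have chainP F : (F `<=` P)%classic -> total_on F subset -> P (\bigcup_(X in F) X)%classic.
  move=> FP Ftot.
  have FXP X x : F X -> X x -> proper_with_a X.
    by move=> FX Xx; case: (FP X FX) => // X0; rewrite X0 in Xx.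
  have [[X FX [x Xx]]|F0] := pselect (exists2 X, F X & exists x, X x); last first.
    left; apply/seteqP; split=> // y [Y FY Yy].
    by case: F0; exists Y => //; exists y.
  have [[X0 _] _ Xa] := FXP X x FX Xx.
  right; split; [split; [|split]| |]; first by exists X.
  - move=> y z [Y FY Yy] [Z FZ Zz]; have [YZ|ZY] := Ftot Y Z FY FZ.
      have [[_ [ZD _]] _ _] := FXP Z z FZ Zz; exists Z => //; exact: ZD (YZ y Yy) Zz.
    have [[_ [YD _]] _ _] := FXP Y y FY Yy; exists Y => //; exact: YD Yy (ZY z Zz).
  - by move=> r y [Y FY Yy]; exists Y => //; have [[_ [_ YM]] _ _] := FXP Y y FY Yy; apply: YM.
  - by move=> [Y FY Y1]; have [] := FXP Y 1 FY Y1.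
  - by exists X.
have [A [PA Amax]] := Zorn_bigcup chainP.
have Ra : proper_with_a (fun y => exists r, y = r * a).
  split; [split; [|split]| |].
  - by exists 0; rewrite mul0r.
  - by move=> _ _ [r ->] [s ->]; exists (r + s); rewrite mulrDl.
  - by move=> r _ [s ->]; exists (r * s); rewrite mulrA.
  - by move=> [r /esym ra1]; case/negP: Na; apply/unitrPr; exists r; rewrite mulrC.
  - by exists 1; rewrite mul1r.
have [Aideal A1 Aa] : proper_with_a A.
  case: PA => // A0; case: (Amax _ _ (or_intror Ra)); rewrite A0.
  by split=> // /(_ a); apply; case: Ra.
exists A; split=> //; split=> //; split=> // J Jideal J1 AJ y Jy.
have [//|nAy] := pselect (A y).
case: (Amax J); last by right; split=> //; apply: AJ.
by split=> // /(_ y Jy).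
Qed.

Hypothesis loc : local_ring R.

Lemma local_nonunitD a b : a \notin GRing.unit -> b \notin GRing.unit ->
  a + b \notin GRing.unit.
Proof.
have [I [[[_ [ID IM]] [I1 _]] uniqI]] := loc.
have memI c : c \notin GRing.unit -> I c.
  by move=> /nonunit_maximal_ideal [J [maxJ Jc]]; apply/(uniqI J maxJ).
move=> /memI Ia /memI Ib; apply/negP => abU.
by apply: I1; rewrite -(mulVr abU); apply/IM/ID.
Qed.

Lemma local_nonunit_sum (I : finType) (P : pred I) (F : I -> R) :
  (forall i, P i -> F i \notin GRing.unit) -> \sum_(i | P i) F i \notin GRing.unit.
Proof.
move=> FN; apply: (big_ind (fun c => c \notin GRing.unit)) => //.
- by rewrite unitr0.
- exact: local_nonunitD.
Qed.

Lemma local_unitD a b : a \is a GRing.unit -> b \notin GRing.unit ->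
  a + b \is a GRing.unit.
Proof.
move=> aU bN; apply: contraT => abN.
by move: (local_nonunitD abN (b := - b)); rewrite unitrN addrK aU; apply.
Qed.

(* The identity permutation contributes a unit to the determinant, any other
   one a nonunit off-diagonal factor. *)
Lemma local_unitmx1B n (U : 'M[R]_n) :
  (forall i j, U i j \notin GRing.unit) -> 1%:M - U \in unitmx.
Proof.
move=> UN; rewrite unitmxE /determinant (bigD1 (1%g : 'S_n)) //= odd_perm1 mul1r.
apply: local_unitD.
  by rewrite unitr_prod // => i _; rewrite perm1 !mxE eqxx local_unitD ?unitr1 ?unitrN.
apply: local_nonunit_sum => s s1.
have [i si] : exists i, s i != i.
  apply/existsP; rewrite -negb_forall; apply: contra s1 => /forallP s1.
  by apply/eqP/permP => i; rewrite perm1; apply/eqP.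
rewrite (bigD1 i) //= !mxE eq_sym (negbTE si) sub0r.
by rewrite !unitrM unitrN (negbTE (UN _ _)) !andbF.
Qed.

Definition nonunit_span (I : finType) (s : I -> R) (r : R) :=
  exists u : I -> R, (forall i, u i \notin GRing.unit) /\ r = \sum_i u i * s i.

Section NonunitSpan.
Variables (I : finType) (s : I -> R).

Lemma nonunit_span_gen u i : u \notin GRing.unit -> nonunit_span s (u * s i).
Proof.
move=> uN; exists (fun j => (j == i)%:R * u); split.
  by move=> j; case: eqP => _; rewrite ?mul1r ?mul0r ?unitr0.
rewrite (bigD1 i) //= eqxx mul1r big1 ?addr0 // => j /negbTE->.
by rewrite !mul0r.
Qed.

Lemma nonunit_spanMl a r : nonunit_span s r -> nonunit_span s (a * r).
Proof.
move=> [u [uN ->]]; exists (fun i => a * u i); split; last first.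
  by rewrite mulr_sumr; apply: eq_bigr => i _; rewrite mulrA.
by move=> i; rewrite unitrM (negbTE (uN i)) andbF.
Qed.

Lemma nonunit_spanMr a r : nonunit_span s r -> nonunit_span s (r * a).
Proof. by rewrite mulrC; apply: nonunit_spanMl. Qed.

Lemma nonunit_spanD r r' : nonunit_span s r -> nonunit_span s r' -> nonunit_span s (r + r').
Proof.
move=> [u [uN ->]] [v [vN ->]]; exists (fun i => u i + v i); split.
  by move=> i; apply: local_nonunitD.
by rewrite -big_split; apply: eq_bigr => i _; rewrite mulrDl.
Qed.

Lemma nonunit_span_sum (J : finType) (F : J -> R) :
  (forall j, nonunit_span s (F j)) -> nonunit_span s (\sum_j F j).
Proof.
move=> FJ; apply: (big_ind (nonunit_span s)) => //; last exact: nonunit_spanD.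
by exists (fun=> 0); split=> [i|]; rewrite ?unitr0 // big1 // => i _; rewrite mul0r.
Qed.
End NonunitSpan.

Lemma local_nakayama (I : finType) (s : I -> R) :
  (forall i, nonunit_span s (s i)) -> forall i, s i = 0.
Proof.
move=> /choice [u us]; pose e := @enum_val I (mem predT).
pose U := \matrix_(k, l) u (e k) (e l); pose S := \col_k s (e k).
have SUS : (1%:M - U) *m S = 0.
  apply/matrixP => k l; rewrite mulmxBl mul1mx !mxE.
  have [_ ->] := us (e k); rewrite big_enum_val; apply/eqP; rewrite subr_eq0.
  by apply/eqP/eq_bigr => m _; rewrite !mxE.
have UN k l : U k l \notin GRing.unit by rewrite mxE; case: (us (e k)).
have S0 : S = 0 by rewrite -[S](mulKmx (local_unitmx1B UN)) SUS mulmx0.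
by move=> i; have /matrixP/(_ (enum_rank i) 0) := S0; rewrite !mxE /e enum_rankK.
Qed.

Lemma local_mx_frob_eq0 p K n (W : 'M[R]_(K, n)) (A : 'M_K) (P : 'M_n) (C : 'M_K) :
  (1 < p)%N -> (forall t i, W t i \notin GRing.unit) -> (forall t l, C t l \notin GRing.unit) ->
  W = A *m map_mx (fun a => a ^+ p) W *m P + C *m W -> W = 0.
Proof.
move=> p_gt1 WN CN WE.
have [s sE] : {s : 'I_K * 'I_n -> R | forall t i, W t i = s (t, i)}.
  by exists (fun z => W z.1 z.2).
suff Ws t i : nonunit_span s (W t i).
  apply/matrixP => t i; rewrite mxE sE; apply: local_nakayama => -[t' i'].
  by rewrite -sE.
rewrite WE !mxE; apply: nonunit_spanD.
  apply: nonunit_span_sum => j; apply: nonunit_spanMr; rewrite mxE.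
  apply: nonunit_span_sum => l; apply: nonunit_spanMl; rewrite mxE.
  rewrite -(prednK (ltnW p_gt1)) exprSr sE; apply: nonunit_span_gen.
  by rewrite -sE unitrX_pos ?WN // -ltnS prednK // ltnW.
by apply: nonunit_span_sum => l; rewrite [X in _ * X]sE; apply: nonunit_span_gen.
Qed.
End LocalRing.

Section Quotient.
Variables (R : pzRingType) (V : lmodType R).

Record submodule := Submodule {
  submod_mem :> V -> Prop;
  submod0 : submod_mem 0;
  submodD u v : submod_mem u -> submod_mem v -> submod_mem (u + v);
  submodZ a v : submod_mem v -> submod_mem (a *: v) }.

Variable S : submodule.

Lemma submodN v : S v -> S (- v).
Proof. by rewrite -scaleN1r; apply: submodZ. Qed.

Lemma submodB u v : S u -> S v -> S (u - v).
Proof. by move=> Su /submodN; apply: submodD. Qed.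

(* A coset is represented by the element that choice picks in it. *)
Definition coset_rep (v : V) : V := xget 0 (fun w => S (w - v)).

Lemma coset_repP v : S (coset_rep v - v).
Proof.
by apply: (@xgetI _ 0 (fun w => S (w - v)) v); rewrite subrr; apply: submod0.
Qed.

Lemma eq_coset_rep u v : S (u - v) -> coset_rep u = coset_rep v.
Proof.
move=> Suv; rewrite /coset_rep; congr (xget _ _); apply/funext => w; apply/propext.
split=> Sw.
  have -> : w - v = (w - u) + (u - v) by rewrite addrA subrK.
  exact: submodD.
have -> : w - u = (w - v) - (u - v) by rewrite opprB addrA subrK.
exact: submodB.
Qed.

Lemma coset_repK v : coset_rep (coset_rep v) = coset_rep v.
Proof. exact/eq_coset_rep/coset_repP. Qed.

Definition quot := {v : V | coset_rep v == v}.
HB.instance Definition _ := Choice.on quot.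

Definition qpi (v : V) : quot := exist _ (coset_rep v) (introT eqP (coset_repK v)).

Lemma qpiK (q : quot) : qpi (val q) = q.
Proof. by apply: val_inj => /=; apply/eqP; case: q. Qed.

Lemma qpi_eqP u v : qpi u = qpi v <-> S (u - v).
Proof.
split=> [/(congr1 val) /= euv|Suv]; last exact/val_inj/eq_coset_rep.
have -> : u - v = (coset_rep v - v) - (coset_rep u - u).
  by rewrite euv opprB [RHS]addrC addrA subrK.
by apply: submodB; apply: coset_repP.
Qed.

Let qadd (q r : quot) := qpi (val q + val r).
Let qopp (q : quot) := qpi (- val q).
Let qscale (a : R) (q : quot) := qpi (a *: val q).

Let qaddE u v : qadd (qpi u) (qpi v) = qpi (u + v).
Proof. by apply/qpi_eqP; rewrite opprD addrACA; apply: submodD; apply: coset_repP. Qed.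

Let qoppE v : qopp (qpi v) = qpi (- v).
Proof. by apply/qpi_eqP; rewrite -opprD; apply/submodN/coset_repP. Qed.

Let qscaleE a v : qscale a (qpi v) = qpi (a *: v).
Proof. by apply/qpi_eqP; rewrite -scalerBr; apply: submodZ; apply: coset_repP. Qed.

Let qaddA : associative qadd.
Proof. by move=> q r t; rewrite -[q]qpiK -[r]qpiK -[t]qpiK !qaddE addrA. Qed.
Let qaddC : commutative qadd.
Proof. by move=> q r; rewrite -[q]qpiK -[r]qpiK !qaddE addrC. Qed.
Let qadd0 : left_id (qpi 0) qadd.
Proof. by move=> q; rewrite -[q]qpiK qaddE add0r. Qed.
Let qaddN : left_inverse (qpi 0) qopp qadd.
Proof. by move=> q; rewrite -[q]qpiK qoppE qaddE addNr. Qed.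

HB.instance Definition _ := GRing.isZmodule.Build quot qaddA qaddC qadd0 qaddN.

Let qscaleA a b q : qscale a (qscale b q) = qscale (a * b) q.
Proof. by rewrite -[q]qpiK !qscaleE scalerA. Qed.
Let qscale1 : left_id 1 qscale.
Proof. by move=> q; rewrite -[q]qpiK qscaleE scale1r. Qed.
Let qscaleDr : right_distributive qscale +%R.
Proof.
by move=> a q r; rewrite -[q]qpiK -[r]qpiK [qpi _ + qpi _]qaddE !qscaleE [qpi _ + qpi _]qaddE scalerDr.
Qed.
Let qscaleDl q : {morph qscale^~ q : a b / a + b}.
Proof. by move=> a b; rewrite -[q]qpiK !qscaleE [qpi _ + qpi _]qaddE scalerDl. Qed.

HB.instance Definition _ := GRing.Zmodule_isLmodule.Build R quot qscaleA qscale1 qscaleDr qscaleDl.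

Fact qpi_is_linear : linear qpi.
Proof. by move=> a u v; rewrite [a *: qpi _]qscaleE [qpi _ + qpi _]qaddE. Qed.
HB.instance Definition _ := GRing.isLinear.Build R V quot _ qpi qpi_is_linear.

Lemma qpi_eq0P v : qpi v = 0 <-> S v.
Proof. by rewrite (qpi_eqP v 0) subr0. Qed.
End Quotient.

Section ImageSubmodule.
Variables (R : pzRingType) (U V : lmodType R) (f : {linear U -> V}).

Let image v := exists u, f u = v.

Let image0 : image 0.
Proof. by exists 0; rewrite linear0. Qed.

Let imageD v w : image v -> image w -> image (v + w).
Proof. by move=> [u <-] [u' <-]; exists (u + u'); rewrite linearD. Qed.

Let imageZ a v : image v -> image (a *: v).
Proof. by move=> [u <-]; exists (a *: u); rewrite linearZ. Qed.

Definition image_submodule := Submodule image0 imageD imageZ.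
End ImageSubmodule.

Section Combinations.
Variables (R : pzRingType) (V : lmodType R).

Definition comb n (x : 'I_n -> V) (c : 'rV[R]_n) : V := \sum_i c 0 i *: x i.

Fact comb_is_linear n (x : 'I_n -> V) : linear (comb x).
Proof.
move=> a c d; rewrite /comb scaler_sumr -big_split; apply: eq_bigr => i _.
by rewrite !mxE scalerDl scalerA.
Qed.
HB.instance Definition _ n (x : 'I_n -> V) :=
  GRing.isLinear.Build R 'rV_n V _ (comb x) (comb_is_linear x).

Lemma comb_delta n (x : 'I_n -> V) i : comb x (delta_mx 0 i) = x i.
Proof.
rewrite /comb (bigD1 i) //= mxE !eqxx scale1r big1 ?addr0 // => j ji.
by rewrite mxE (negbTE ji) andbF scale0r.
Qed.

Lemma comb_mulmx m n (x : 'I_n -> V) (u : 'rV[R]_m) (A : 'M_(m, n)) :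
  comb x (u *m A) = comb (fun k => comb x (row k A)) u.
Proof. by rewrite mulmx_sum_row linear_sum; apply: eq_bigr => k _; rewrite linearZ. Qed.

Definition spans n (x : 'I_n -> V) := forall v, exists c, comb x c = v.
End Combinations.

Section LinearMaps.
Variable R : comUnitRingType.
Implicit Types U V : lmodType R.

(* [Rlinear f] is [linear f] unfolded, so [f] packs into a [{linear U -> V}]. *)
Lemma Rlinear_comb U V (f : U -> V) n (x : 'I_n -> U) c :
  Rlinear f -> f (comb x c) = comb (f \o x) c.
Proof.
move=> flin; pose F : {linear U -> V} := HB.pack f (GRing.isLinear.Build R U V _ f flin).
by rewrite -[f _]/(F _) linear_sum; apply: eq_bigr => i _; rewrite linearZ.
Qed.

Lemma Rlinear0 U V (f : U -> V) : Rlinear f -> f 0 = 0.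
Proof.
by move=> flin; exact: (linear0 (HB.pack f (GRing.isLinear.Build R U V _ f flin))).
Qed.

Lemma comb_delta_mx n (u : 'rV[R]_n) : comb (delta_mx 0) u = u.
Proof. exact/esym/row_sum_delta. Qed.

Lemma comb_row n m (A : 'M[R]_(m, n)) u : comb (fun i => row i A) u = u *m A.
Proof. exact/esym/mulmx_sum_row. Qed.

Lemma Rlinear_rV_comb V n (f : 'rV[R]_n -> V) u :
  Rlinear f -> f u = comb (fun i => f (delta_mx 0 i)) u.
Proof. by move=> flin; rewrite -{1}(comb_delta_mx u) Rlinear_comb. Qed.

Lemma frob_linear_comb p U V (f : U -> V) n (x : 'I_n -> U) c :
  frob_linear p f -> f (comb x c) = comb (f \o x) (map_mx (fun a => a ^+ p) c).
Proof.
move=> [fD fZ]; have f0 : f 0 = 0 by apply: (addIr (f 0)); rewrite -fD !add0r.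
by rewrite /comb (big_morph f fD f0); apply: eq_bigr => i _; rewrite fZ mxE.
Qed.
End LinearMaps.

Section Generators.
Variables (R : comUnitRingType) (M : lmodType R).

Lemma finitely_presented_relations n (x : 'I_n -> M) :
  finitely_presented M -> spans x ->
  exists K (W : 'M[R]_(K, n)),
    (forall t, comb x (row t W) = 0) /\ forall c, comb x c = 0 -> exists b, c = b *m W.
Proof.
move=> [n0 [m0 [f [g [flin [glin [fsurj fker]]]]]]] xspan.
have /choice [U0 fU] : forall i, exists u, f u = x i := fun i => fsurj (x i).
have /choice [B0 fB] : forall a, exists c, comb x c = f (delta_mx 0 a) := fun a => xspan _.
(* [U] lifts [x] along [f], [B] turns coordinates in [R^n0] into coordinates
   on [x], and the rows of [G] span the kernel of [f]. *)
pose U := \matrix_i U0 i; pose B := \matrix_a B0 a; pose G := \matrix_b g (delta_mx 0 b).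
have fE v : f v = comb x (v *m B).
  by rewrite comb_mulmx (Rlinear_rV_comb _ flin); apply: eq_bigr => a _; rewrite rowK fB.
have gE w : g w = w *m G.
  by rewrite (Rlinear_rV_comb _ glin) -comb_row; apply: eq_bigr => b _; rewrite rowK.
exists (n + m0)%N, (col_mx (1%:M - U *m B) (G *m B)); split.
  move=> t; case: (split_ordP t) => [i ->|b ->].
    by rewrite rowKu linearB /= row1 row_mul linearB /= comb_delta rowK -fE fU subrr.
  by rewrite rowKd row_mul rowK -fE; apply/fker; exists (delta_mx 0 b).
move=> c c0; have [w gw] : exists w, g w = c *m U.
  by apply/fker; rewrite -comb_row (Rlinear_comb _ _ flin) -c0; apply: eq_bigr => i _; rewrite /= rowK fU.
by exists (row_mx c w); rewrite mul_row_col mulmxBr mulmx1 !mulmxA -gE gw subrK.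
Qed.

Lemma min_spanning_family : (exists n (x : 'I_n -> M), spans x) ->
  exists n (x : 'I_n -> M), spans x /\ forall k (y : 'I_k -> M), spans y -> (n <= k)%N.
Proof.
move=> [n0 [x0 x0span]].
have Pn0 : exists n, `[< exists x : 'I_n -> M, spans x >] by exists n0; apply/asboolP; exists x0.
case: (ex_minnP Pn0) => n /asboolP [x xspan] nmin; exists n, x; split=> // k y yspan.
by apply: nmin; apply/asboolP; exists y.
Qed.

Lemma finitely_presented_spanning : finitely_presented M -> exists n (x : 'I_n -> M), spans x.
Proof.
move=> [n [_ [f [_ [flin [_ [fsurj _]]]]]]]; exists n, (fun i => f (delta_mx 0 i)) => v.
by have [u <-] := fsurj v; exists u; rewrite (Rlinear_rV_comb _ flin).
Qed.

Lemma min_spanning_relation_nonunit n (x : 'I_n -> M) c :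
  spans x -> (forall k (y : 'I_k -> M), spans y -> (n <= k)%N) ->
  comb x c = 0 -> forall j, c 0 j \notin GRing.unit.
Proof.
case: n => [|n] in x c * => xspan xmin c0 j; first by case: j.
apply/negP => cjU.
pose y k := x (lift j k); pose rest (a : 'rV[R]_n.+1) : 'rV_n := \row_k a 0 (lift j k).
have combE a : comb x a = a 0 j *: x j + comb y (rest a).
  by rewrite /comb (bigD1_ord j) //=; congr (_ + _); apply: eq_bigr => k _; rewrite mxE.
have xj : x j = comb y (- (c 0 j)^-1 *: rest c).
  move/eqP: c0; rewrite combE addr_eq0 => /eqP cxj.
  by rewrite linearZ /= scaleNr -scalerN -cxj scalerA mulVr // scale1r.
have yspan : spans y.
  move=> v; have [a <-] := xspan v.
  by exists (a 0 j *: (- (c 0 j)^-1 *: rest c) + rest a); rewrite linearD linearZ /= -xj combE.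
by have := xmin _ _ yspan; rewrite ltnn.
Qed.

Lemma spans_free_module n (x : 'I_n -> M) :
  spans x -> (forall c, comb x c = 0 -> c = 0) -> free_module M.
Proof.
move=> xspan xfree; exists 'I_n, x; split; last first.
  by move=> v; have [c <-] := xspan v; exists n, id, (fun i => c 0 i).
move=> k idx d idx_inj d0 i.
pose c := \row_j \sum_(l < k | idx l == j) d l.
have /xfree/matrixP/(_ 0 (idx i)) : comb x c = 0.
  rewrite -{}d0 /comb; under eq_bigr do rewrite mxE scaler_suml.
  rewrite (exchange_big_dep xpredT) //=; apply: eq_bigr => l _.
  by rewrite (big_pred1 (idx l)) // => j; rewrite /= eq_sym.
by rewrite !mxE (big_pred1 i) // => l; rewrite /= (inj_eq idx_inj).
Qed.
End Generators.

Section FrobeniusPullback.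
Variables (R : comUnitRingType) (p : nat) (M N : lmodType R) (phi : M -> N).
Hypothesis phi_pullback : is_frob_pullback p phi.

Lemma frob_pullback_spans n (x : 'I_n -> M) : spans x -> spans (phi \o x).
Proof.
(* The projection onto [N / <phi x>] and the zero map both factor the zero
   map through [phi]. *)
move=> xspan; have [phi_frob univ] := phi_pullback.
pose S := image_submodule (comb (phi \o x)).
have zero_frob : frob_linear p (fun _ : M => 0 : quot S) by split=> *; rewrite ?addr0 ?scaler0.
have [g [_ [_ guniq]]] := univ _ _ zero_frob.
have qpi0 v : qpi S v = 0.
  have qpi_lin : Rlinear (qpi S) by move=> a u w; rewrite linearP.
  have zero_lin : Rlinear (fun _ : N => 0 : quot S) by move=> *; rewrite scaler0 addr0.
  have qpi_phi m : 0 = qpi S (phi m).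
    apply/esym/qpi_eq0P; have [c <-] := xspan m.
    by exists (map_mx (fun a => a ^+ p) c); rewrite (frob_linear_comb _ _ phi_frob).
  by rewrite (guniq _ qpi_lin qpi_phi) -(guniq _ zero_lin (fun=> erefl)).
by move=> v; have /qpi_eq0P := qpi0 v.
Qed.

(* The pullback is modelled by [R^n] modulo the rows of [W^(p)], with [phi]
   replaced by [m |-> (coordinates of m)^(p)]; this is well defined because the
   Frobenius is a ring morphism. *)
Section FrobeniusModel.
Hypothesis chR : p \in [pchar R].
Variables (n K : nat) (x : 'I_n -> M) (W : 'M[R]_(K, n)).
Hypotheses (xspan : spans x) (Wspan : forall c, comb x c = 0 -> exists b, c = b *m W).

Let coord_spec := @choice _ _ (fun m c => comb x c = m) xspan.
Let coord m := projT1 coord_spec m.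
Let coordK m : comb x (coord m) = m := projT2 coord_spec m.

Local Notation frob := (map_mx (pFrobenius_aut chR)).

Let L := image_submodule (@mulmxr R 1 K n (frob W)).
Let frob_model (m : M) : quot L := qpi L (frob (coord m)).

Let frob_modelE c : frob_model (comb x c) = qpi L (frob c).
Proof.
apply/qpi_eqP; have [b bW] : exists b, coord (comb x c) - c = b *m W.
  by apply: Wspan; rewrite linearB /= coordK subrr.
by exists (frob b); rewrite /= -map_mxB bW map_mxM.
Qed.

Let frob_model_frob_linear : frob_linear p frob_model.
Proof.
split=> [m m'|a m].
  by rewrite -[m]coordK -[m']coordK -linearD /= !frob_modelE map_mxD linearD.
by rewrite -[m]coordK -linearZ /= !frob_modelE map_mxZ linearZ /= pFrobenius_autE.
Qed.

Lemma frob_pullback_relations d :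
  comb (phi \o x) d = 0 -> exists b, d = b *m map_mx (fun a => a ^+ p) W.
Proof.
move=> d0; have [_ univ] := phi_pullback.
have [g [glin [gphi _]]] := univ _ _ frob_model_frob_linear.
suff /qpi_eq0P [b <-] : qpi L d = 0.
  by exists b; congr (_ *m _); apply: eq_map_mx => a; rewrite pFrobenius_autE.
rewrite -(comb_delta_mx d) (Rlinear_comb _ _ (linearP (qpi L))).
rewrite -(Rlinear0 glin) -d0 (Rlinear_comb _ _ glin); apply: eq_bigr => i _ /=.
by rewrite -gphi -(comb_delta x) frob_modelE map_delta_mx.
Qed.
End FrobeniusModel.
End FrobeniusPullback.

Section FrobeniusIso.
Variables (R : comUnitRingType) (p : nat) (M : lmodType R) (phi : M -> M).
Hypotheses (loc : local_ring R) (chR : p \in [pchar R]) (phi_pullback : is_frob_pullback p phi).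
Variables (n K : nat) (x : 'I_n -> M) (W : 'M[R]_(K, n)).
Hypotheses (xspan : spans x) (Wrel : forall t, comb x (row t W) = 0)
  (Wspan : forall c, comb x c = 0 -> exists b, c = b *m W)
  (W_nonunit : forall t i, W t i \notin GRing.unit).

Lemma frob_pullback_iso_relations_eq0 : W = 0.
Proof.
have [coord coordK] := @choice _ _ (fun m c => comb x c = m) xspan.
have /choice [Q0 Qx] : forall i, exists e, comb (phi \o x) e = x i :=
  fun i => frob_pullback_spans phi_pullback xspan (x i).
pose Q := \matrix_i Q0 i; pose P := \matrix_j coord (phi (x j)).
have combQ u : comb (phi \o x) (u *m Q) = comb x u.
  by rewrite comb_mulmx; apply: eq_bigr => i _; rewrite rowK Qx.
have combP u : comb x (u *m P) = comb (phi \o x) u.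
  by rewrite comb_mulmx; apply: eq_bigr => j _; rewrite rowK coordK.
have [B WQ] : exists B, W *m Q = B *m map_mx (fun a => a ^+ p) W.
  have /choice [b bW] : forall t, exists b, row t W *m Q = b *m map_mx (fun a => a ^+ p) W.
    by move=> t; apply: (frob_pullback_relations phi_pullback chR xspan Wspan); rewrite combQ Wrel.
  by exists (\matrix_t b t); apply/row_matrixP => t; rewrite !row_mul rowK bW.
have [T QP] : exists T, 1%:M - Q *m P = T *m W.
  have /choice [b bW] : forall i, exists b, row i (1%:M - Q *m P) = b *m W.
    move=> i; apply: Wspan.
    by rewrite linearB /= row1 row_mul linearB /= comb_delta combP rowK Qx subrr.
  by exists (\matrix_i b i); apply/row_matrixP => i; rewrite row_mul rowK bW.
have WE : W = B *m map_mx (fun a => a ^+ p) W *m P + W *m T *m W.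
  by rewrite -[W in LHS]mulmx1 -(subrKC (Q *m P) 1%:M) QP mulmxDr !mulmxA WQ.
have p_gt1 : (1 < p)%N by apply/prime_gt1/(pcharf_prime chR).
apply: (local_mx_frob_eq0 loc p_gt1 W_nonunit _ WE) => t l.
rewrite mxE; apply: (local_nonunit_sum loc) => k _.
by rewrite unitrM (negbTE (W_nonunit _ _)).
Qed.
End FrobeniusIso.

Theorem lemma2p8 (p : nat) (R : comUnitRingType) (M : lmodType R) :
  local_ring R -> Fp_algebra R p ->
  finitely_presented M -> frob_pullback_iso p M ->
  free_module M.
Proof.
move=> loc [p_prime p0] Mfp [phi phi_pullback].
have chR : p \in [pchar R] by rewrite inE p_prime p0 eqxx.
have [n [x [xspan xmin]]] := min_spanning_family (finitely_presented_spanning Mfp).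
have [K [W [Wrel Wspan]]] := finitely_presented_relations Mfp xspan.
have W_nonunit t i : W t i \notin GRing.unit.
  by have := min_spanning_relation_nonunit xspan xmin (Wrel t) i; rewrite mxE.
have W0 := frob_pullback_iso_relations_eq0 loc chR phi_pullback xspan Wrel Wspan W_nonunit.
by apply: (spans_free_module xspan) => c /Wspan [b ->]; rewrite W0 mulmx0.
Qed.
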